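(* For each integer $m\ge1$, let $H_m$ be the configuration whose underlying graph is the path $a - b - c - d$ (edges $ab$, $bc$, $cd$), with wakeup tags $t_b=t_c=0$, $t_a=m$, $t_d=m+1$. Then each configuration $H_m$ is feasible, and every dedicated leader election algorithm for $H_m$ takes time at least $m$.
   Context: Model. A configuration is a finite simple undirected connected graph $G$ in which each node $v$ is tagged with a non-negative integer $t_v$ (wakeup tag). Nodes are anonymous and communicate in synchronous global rounds. A node $v$ wakes up in the first global round $r\le t_v$ in which it receives a message, if any, and otherwise in global round $t_v$; its local clock is $0$ in its wakeup round, it acts from local round $1$, and nodes do not know the global clock. In each round a node transmits a message to all neighbours, listens, or terminates. A listening node receives $M$ if exactly one neighbour transmits ($M$), hears collision noise (distinct from silence and messages) if at least two neighbours transmit, and silence otherwise; a transmitting node hears nothing. A DRIP is a common function mapping a node's history (what it heard in each local round $0,\ldots,i-1$, including whether/by which message it was woken) to its action in local round $i\ge1$, with every node eventually terminating permanently; a decision function maps each node's final history to $\{0,1\}$; a dedicated leader election algorithm for $G$ is a DRIP plus decision function such that exactly one node of $G$ outputs $1$; $G$ is feasible if one exists. The time of such an algorithm is the number of rounds until the nodes terminate. *)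

From mathcomp Require Import all_boot.
Set Implicit Arguments. Unset Strict Implicit. Unset Printing Implicit Defensive.

(* What a node hears in one local round. [HNothing] = it transmitted. *)
Inductive heard := HSilence | HNoise | HMsg of nat | HNothing.

(* Action of a node in a local round i >= 1. *)
Inductive action := Transmit of nat | Listen | Terminate.

(* History: list of what the node heard in local rounds 0, ..., i-1.
   Entry 0 is [HMsg M] if the node was woken by message M, otherwise what it
   heard (silence / noise) in its spontaneous wakeup round. *)
Definition history := seq heard.
Definition drip := history -> action.
Definition decision := history -> bool.

Inductive nstate := Asleep | Awake of history | Done of history.

Section Exec.
Variables (T : finType) (adj : rel T) (tag : T -> nat) (A : drip).

Definition transmits (s : nstate) : option nat :=
  if s is Awake h then (if A h is Transmit n then Some n else None) else None.

Definition reception (s : T -> nstate) (v : T) : heard :=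
  match pmap (fun u => transmits (s u)) [seq u <- enum T | adj v u] with
  | [::] => HSilence
  | [:: n] => HMsg n
  | _ => HNoise
  end.

Definition step (r : nat) (s : T -> nstate) (v : T) : nstate :=
  match s v with
  | Done h => Done h
  | Awake h =>
      match A h with
      | Terminate => Done h
      | Transmit _ => Awake (rcons h HNothing)
      | Listen => Awake (rcons h (reception s v))
      end
  | Asleep =>
      let x := reception s v in
      if (r <= tag v) && ((r == tag v) || (if x is HMsg _ then true else false))
      then Awake [:: x] else Asleep
  end.

Fixpoint exec (r : nat) : T -> nstate :=
  match r with
  | 0 => step 0 (fun _ => Asleep)
  | r'.+1 => step r'.+1 (exec r')
  end.

Definition all_terminated (r : nat) : bool :=
  [forall v, if exec r v is Done _ then true else false].

Definition output (d : decision) (r : nat) (v : T) : bool :=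
  if exec r v is Done h then d h else false.

End Exec.

Definition dedicated_LE (T : finType) (adj : rel T) (tag : T -> nat)
  (A : drip) (d : decision) : Prop :=
  exists r, all_terminated adj tag A r /\ #|[set v | output adj tag A d r v]| = 1.

Definition feasible (T : finType) (adj : rel T) (tag : T -> nat) : Prop :=
  exists A d, dedicated_LE adj tag A d.

(* The algorithm takes time at least t: no global round r < t by whose end
   all nodes have terminated (time = last global round in which a node
   terminates). *)
Definition time_at_least (T : finType) (adj : rel T) (tag : T -> nat)
  (A : drip) (t : nat) : Prop :=
  forall r, all_terminated adj tag A r -> t <= r.

(* The configuration H_m: path a - b - c - d, nodes 0,1,2,3 of 'I_4. *)
Definition H_adj : rel 'I_4 :=
  fun i j => (i.+1 == j :> nat) || (j.+1 == i :> nat).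

Definition H_tag (m : nat) (i : 'I_4) : nat :=
  match val i with
  | 0 => m
  | 1 => 0
  | 2 => 0
  | _ => m.+1
  end.

From mathcomp Require Import all_boot.

Set Implicit Arguments.
Unset Strict Implicit.
Unset Printing Implicit Defensive.

(* Lower bound: the reflection a <-> d, b <-> c is an automorphism of the path
   and, as long as neither a nor d has woken up spontaneously (before global
   round m), it maps every node's state to the state of its mirror image.  An
   algorithm terminating before round m would thus give mirror nodes equal
   outputs, whereas a unique leader would have to be its own mirror image.

   Feasibility: b and c listen until local round m + 1 and then transmit.  By
   then a has woken up spontaneously in round m, while d, still asleep, is
   woken up by c's message in round m + 1 = t_d; so d is the only node whose
   history starts with a message. *)

Section Execution.
Variables (T : finType) (adj : rel T) (tag : T -> nat) (A : drip).

Lemma execS r : exec adj tag A r.+1 = step adj tag A r.+1 (exec adj tag A r).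
Proof. by []. Qed.

Lemma exec_Done k r v h :
  exec adj tag A r v = Done h -> exec adj tag A (k + r) v = Done h.
Proof. by move=> Hv; elim: k => // k IHk; rewrite addSn execS /step IHk. Qed.

Lemma all_terminated_exec r k :
  all_terminated adj tag A r -> r <= k -> exec adj tag A k =1 exec adj tag A r.
Proof.
move=> /forallP done_r /subnK <- v.
by move: (done_r v); case Ev: (exec _ _ _ r v) => [||h] // _; exact: exec_Done Ev.
Qed.

(* [reception adj A s v] is convertible to [hear (pmap _ _)]. *)
Definition hear (l : seq nat) : heard :=
  match l with
  | [::] => HSilence
  | [:: n] => HMsg n
  | _ => HNoise
  end.

Lemma hear_perm l1 l2 : perm_eq l1 l2 -> hear l1 = hear l2.
Proof.
move=> l12; have [small|big] := leqP (size l2) 1.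
  by rewrite (perm_small_eq small l12).
by move: (perm_size l12) big; case: l1 l2 {l12} => [|? [|? ?]] [|? [|? ?]].
Qed.

Section Automorphism.
Variable f : T -> T.
Hypotheses (f_inj : injective f) (adj_f : forall u v, adj (f u) (f v) = adj u v).

Lemma reception_invariant s v :
  (forall u, s (f u) = s u) -> reception adj A s (f v) = reception adj A s v.
Proof.
move=> sf; apply: hear_perm.
have [g _ gK] := injF_bij f_inj.
have nbrs_f : perm_eq [seq u <- enum T | adj (f v) u]
                      (map f [seq u <- enum T | adj v u]).
  apply: uniq_perm; first by rewrite filter_uniq ?enum_uniq.
    by rewrite map_inj_uniq // filter_uniq ?enum_uniq.
  have mem_nbrs u w : (w \in [seq y <- enum T | adj u y]) = adj u w.
    by rewrite mem_filter mem_enum andbT.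
  by move=> w; rewrite -[w]gK (mem_map f_inj) !mem_nbrs adj_f.
apply: perm_trans (perm_pmap _ nbrs_f) _.
suff -> : forall l, pmap (fun u => transmits A (s u)) (map f l) =
                    pmap (fun u => transmits A (s u)) l by [].
by elim=> //= u l ->; rewrite sf.
Qed.

Variable r : nat.
Hypothesis tag_f : forall v, tag (f v) = tag v \/ r < tag v /\ r < tag (f v).

Lemma step_invariant r' s v : r' <= r -> (forall u, s (f u) = s u) ->
  step adj tag A r' s (f v) = step adj tag A r' s v.
Proof.
move=> le_r'r sf; rewrite /step sf reception_invariant //.
case: (s v) => //; case: (tag_f v) => [-> // | [lt_v lt_fv]].
have lt_r'v := leq_ltn_trans le_r'r lt_v.
have lt_r'fv := leq_ltn_trans le_r'r lt_fv.
by rewrite (ltnW lt_r'v) (ltnW lt_r'fv) (ltn_eqF lt_r'v) (ltn_eqF lt_r'fv).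
Qed.

Lemma exec_invariant r' v : r' <= r -> exec adj tag A r' (f v) = exec adj tag A r' v.
Proof.
elim: r' v => [|r' IHr'] v le_r'r; first exact: step_invariant.
by rewrite execS; apply: step_invariant => // u; apply/IHr'/ltnW.
Qed.

Lemma dedicated_LE_not_terminated d :
  (forall v, f v != v) -> dedicated_LE adj tag A d -> ~~ all_terminated adj tag A r.
Proof.
move=> f_moves [r0 [done_r0 one_leader]]; apply/negP => done_r.
have exec_r0 v : exec adj tag A r0 v = exec adj tag A r v.
  rewrite -(all_terminated_exec done_r0 (leq_maxl r0 r)).
  exact: all_terminated_exec done_r (leq_maxr r0 r) v.
have output_f v : output adj tag A d r0 (f v) = output adj tag A d r0 v.
  by rewrite /output !exec_r0 exec_invariant.
move/eqP/cards1P: one_leader => [x leaders].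
have : f x \in [set x] by rewrite -leaders inE output_f -inE leaders set11.
by rewrite inE (negbTE (f_moves x)).
Qed.

End Automorphism.
End Execution.

Lemma H_adj_rev i j : H_adj (rev_ord i) (rev_ord j) = H_adj i j.
Proof. by case: i j => [[|[|[|[|?]]]] ?] [[|[|[|[|?]]]] ?]. Qed.

Lemma rev_ord4_neq (i : 'I_4) : rev_ord i != i.
Proof. by case: i => [[|[|[|[|?]]]] ?]. Qed.

Lemma H_tag_rev m r : r < m -> forall i,
  H_tag m (rev_ord i) = H_tag m i \/ r < H_tag m i /\ r < H_tag m (rev_ord i).
Proof.
move=> lt_rm; have lt_rm1 : r < m.+1 by apply: ltnW.
by case=> [[|[|[|[|?]]]] ?] //=; [right|left|left|right].
Qed.

Lemma H_time_at_least m A d :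
  dedicated_LE H_adj (H_tag m) A d -> time_at_least H_adj (H_tag m) A m.
Proof.
move=> LE r; apply: contraTleq => lt_rm.
exact: (dedicated_LE_not_terminated rev_ord_inj H_adj_rev (H_tag_rev lt_rm) rev_ord4_neq LE).
Qed.

Definition na : 'I_4 := @Ordinal 4 0 isT.
Definition nb : 'I_4 := @Ordinal 4 1 isT.
Definition nc : 'I_4 := @Ordinal 4 2 isT.
Definition nd : 'I_4 := @Ordinal 4 3 isT.

Lemma ord4P (v : 'I_4) : [\/ v = na, v = nb, v = nc | v = nd].
Proof.
case: v => [[|[|[|[|?]]]] ?] //;
  [apply: Or41|apply: Or42|apply: Or43|apply: Or44]; exact: val_inj.
Qed.

Lemma H_neighbours_val (v : 'I_4) :
  map val [seq u <- enum 'I_4 | H_adj v u] =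
  [seq k <- iota 0 4 | (v.+1 == k) || (k.+1 == v)].
Proof.
by rewrite -val_enum_ord (filter_map val (fun k => (v.+1 == k) || (k.+1 == v))).
Qed.

Lemma H_neighbours_a : [seq u <- enum 'I_4 | H_adj na u] = [:: nb].
Proof. by apply: (inj_map val_inj); rewrite H_neighbours_val. Qed.

Lemma H_neighbours_b : [seq u <- enum 'I_4 | H_adj nb u] = [:: na; nc].
Proof. by apply: (inj_map val_inj); rewrite H_neighbours_val. Qed.

Lemma H_neighbours_c : [seq u <- enum 'I_4 | H_adj nc u] = [:: nb; nd].
Proof. by apply: (inj_map val_inj); rewrite H_neighbours_val. Qed.

Lemma H_neighbours_d : [seq u <- enum 'I_4 | H_adj nd u] = [:: nc].
Proof. by apply: (inj_map val_inj); rewrite H_neighbours_val. Qed.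

Section Receptions.
Variables (A : drip) (s : 'I_4 -> nstate).

Lemma reception_a : reception H_adj A s na = hear (pmap id [:: transmits A (s nb)]).
Proof. by rewrite /reception H_neighbours_a. Qed.

Lemma reception_b :
  reception H_adj A s nb = hear (pmap id [:: transmits A (s na); transmits A (s nc)]).
Proof. by rewrite /reception H_neighbours_b. Qed.

Lemma reception_c :
  reception H_adj A s nc = hear (pmap id [:: transmits A (s nb); transmits A (s nd)]).
Proof. by rewrite /reception H_neighbours_c. Qed.

Lemma reception_d : reception H_adj A s nd = hear (pmap id [:: transmits A (s nc)]).
Proof. by rewrite /reception H_neighbours_d. Qed.

End Receptions.

Definition silent (x : heard) : bool := if x is HSilence then true else false.

Definition shout_at (k : nat) : drip := fun h =>
  if all silent h then (if size h == k then Transmit 0 else Listen) else Terminate.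

Definition woken_by_message : decision := fun h =>
  if h is HMsg _ :: _ then true else false.

Lemma shout_at_silence k n :
  shout_at k (nseq n HSilence) = if n == k then Transmit 0 else Listen.
Proof. by rewrite /shout_at all_nseq orbT size_nseq. Qed.

Lemma rcons_nseq n (x : heard) : rcons (nseq n x) x = nseq n.+1 x.
Proof. by elim: n => //= n ->. Qed.

(* Stated for H_(m+1), so that the last round in which b and c wait is m. *)
Section Feasibility.
Variable m : nat.

Local Notation run := (exec H_adj (H_tag m.+1) (shout_at m.+2)).
Local Notation receptions := (reception_a, reception_b, reception_c, reception_d).

Lemma run_waiting r : r <= m ->
  [/\ run r na = Asleep, run r nb = Awake (nseq r.+1 HSilence),
      run r nc = Awake (nseq r.+1 HSilence) & run r nd = Asleep].
Proof.
elim: r => [|r IHr] lt_rm.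
  by rewrite /= /step !receptions.
have [Ha Hb Hc Hd] := IHr (ltnW lt_rm).
rewrite execS /step !receptions Ha Hb Hc Hd /transmits !shout_at_silence /H_tag /=.
rewrite (ltn_eqF (ltnW lt_rm : r.+1 < m.+2)) /= eqSS (ltn_eqF lt_rm) rcons_nseq.
by rewrite orbF !andbF.
Qed.

Lemma run_a_wakes :
  [/\ run m.+1 na = Awake [:: HSilence], run m.+1 nb = Awake (nseq m.+2 HSilence),
      run m.+1 nc = Awake (nseq m.+2 HSilence) & run m.+1 nd = Asleep].
Proof.
have [Ha Hb Hc Hd] := run_waiting (leqnn m).
rewrite execS /step !receptions Ha Hb Hc Hd /transmits !shout_at_silence /H_tag /=.
by rewrite (ltn_eqF (ltnSn m.+1)) /= rcons_nseq ltnSn eqxx andbF.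
Qed.

Lemma run_shout :
  [/\ run m.+2 na = Awake [:: HSilence; HMsg 0],
      run m.+2 nb = Awake (rcons (nseq m.+2 HSilence) HNothing),
      run m.+2 nc = Awake (rcons (nseq m.+2 HSilence) HNothing)
    & run m.+2 nd = Awake [:: HMsg 0]].
Proof.
have [Ha Hb Hc Hd] := run_a_wakes.
rewrite execS /step !receptions Ha Hb Hc Hd /transmits !shout_at_silence eqxx.
by rewrite /H_tag /= ltnSn.
Qed.

Lemma run_done :
  [/\ run m.+3 na = Done [:: HSilence; HMsg 0],
      run m.+3 nb = Done (rcons (nseq m.+2 HSilence) HNothing),
      run m.+3 nc = Done (rcons (nseq m.+2 HSilence) HNothing)
    & run m.+3 nd = Done [:: HMsg 0]].
Proof.
have [Ha Hb Hc Hd] := run_shout.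
by rewrite execS /step Ha Hb Hc Hd /shout_at all_rcons.
Qed.

End Feasibility.

Lemma H_feasible m : 0 < m -> feasible H_adj (H_tag m).
Proof.
case: m => // m _; exists (shout_at m.+2), woken_by_message, m.+3.
have [Ha Hb Hc Hd] := run_done m.
split.
  by apply/forallP => v; case: (ord4P v) => ->; rewrite ?Ha ?Hb ?Hc ?Hd.
apply/eqP/cards1P; exists nd; apply/setP => v; rewrite !inE /output.
by case: (ord4P v) => ->; rewrite ?Ha ?Hb ?Hc ?Hd.
Qed.

Theorem lemma13 (m : nat) (hm : 1 <= m) :
  feasible H_adj (H_tag m) /\
  (forall (A : drip) (d : decision),
      dedicated_LE H_adj (H_tag m) A d -> time_at_least H_adj (H_tag m) A m).
Proof.
split; [exact: H_feasible | exact: H_time_at_least].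
Qed.
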